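(* Let $\mathbb{V}$ be a finite set of nodes and $Z\notin\mathbb{V}$ an additional node, and let $\omega$ be a symmetric weight function on pairs of distinct nodes of $\mathbb{V}\cup\{Z\}$. Let $\sigma^*$ be an optimal TSP route (minimum-cost Hamiltonian cycle) over $\mathbb{V}$, and let $P,Q$ be two nodes that are neighbours on $\sigma^*$. Suppose there is no unordered pair $\{A,B\}$ of distinct nodes of $\mathbb{V}$ with $\{A,B\}\neq\{P,Q\}$ such that $$\omega(A,Z)+\omega(B,Z)-\omega(A,B)\le \omega(P,Z)+\omega(Q,Z)-\omega(P,Q).$$ Then the route obtained from $\sigma^*$ by inserting $Z$ between $P$ and $Q$ is an optimal TSP route over $\mathbb{V}\cup\{Z\}$.
   Context: For a set of nodes with weights $\omega$, a route is a cyclic ordering (permutation) $\sigma=(\sigma_1,\dots,\sigma_n)$ of all nodes, with cost $c(\sigma)=\omega(\sigma_n,\sigma_1)+\sum_{i=1}^{n-1}\omega(\sigma_i,\sigma_{i+1})$; a route is optimal if it minimizes this cost among all permutations. Two nodes are neighbours on $\sigma$ if they are consecutive in $\sigma$ or are its first and last element. *)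

From mathcomp Require Import all_boot all_order all_algebra.
Set Implicit Arguments. Unset Strict Implicit. Unset Printing Implicit Defensive.
Import Order.TTheory GRing.Theory Num.Theory.
Local Open Scope ring_scope.

(* A route is a sequence listing each node exactly once, read cyclically. *)
Definition is_route (T : finType) (S : {set T}) (s : seq T) : bool :=
  perm_eq s (enum S).

Definition route_cost (T : finType) (R : realDomainType) (w : T -> T -> R)
    (s : seq T) : R :=
  match s with
  | [::] => 0
  | x :: s' => \sum_(e <- zip (x :: s') (rcons s' x)) w e.1 e.2
  end.

Definition optimal_route (T : finType) (R : realDomainType) (w : T -> T -> R)
    (S : {set T}) (s : seq T) : Prop :=
  is_route S s /\ forall t, is_route S t -> route_cost w s <= route_cost w t.

Definition neighbours (T : eqType) (s : seq T) (P Q : T) : bool :=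
  [&& P \in s, Q \in s & (next s P == Q) || (next s Q == P)].

Definition insert_after (T : eqType) (s : seq T) (P Z : T) : seq T :=
  take (index P s).+1 s ++ Z :: drop (index P s).+1 s.

From mathcomp Require Import all_boot all_order all_algebra.
From mathcomp Require Import ring.
Set Implicit Arguments. Unset Strict Implicit. Unset Printing Implicit Defensive.
Import Order.TTheory GRing.Theory Num.Theory.
Local Open Scope ring_scope.

(* Inserting Z between the neighbours A and B of a route over V raises its
   cost by w A Z + w B Z - w A B, and conversely every route over V + {Z}
   arises this way: deleting Z from it leaves a route over V whose cost is
   lower by exactly that amount, for the two neighbours A, B of Z.  Hence the
   cheapest route through Z costs the optimum over V plus the least insertion
   cost over all pairs of neighbours, and by hypothesis that least cost is
   attained by the pair {P, Q}, which is a pair of neighbours on the optimal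
   route over V. *)

Section RouteCost.
Variables (T : finType) (R : realDomainType) (w : T -> T -> R).

Fixpoint path_cost (x : T) (s : seq T) : R :=
  if s is y :: s' then w x y + path_cost y s' else 0.

Lemma sum_zip_path x s y :
  \sum_(e <- zip (x :: s) (rcons s y)) w e.1 e.2 = path_cost x s + w (last x s) y.
Proof.
elim: s x => [|z s IHs] x /=; first by rewrite big_cons big_nil addr0 add0r.
by rewrite big_cons /= IHs addrA.
Qed.

Lemma route_cost_cons x s :
  route_cost w (x :: s) = path_cost x s + w (last x s) x.
Proof. exact: sum_zip_path. Qed.

Lemma path_cost_rcons x s y :
  path_cost x (rcons s y) = path_cost x s + w (last x s) y.
Proof.
elim: s x => [|z s IHs] x /=; first by rewrite add0r addr0.
by rewrite IHs addrA.
Qed.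

Lemma route_cost_rcons s x : route_cost w (rcons s x) = route_cost w (x :: s).
Proof.
case: s => [|y s] //.
by rewrite rcons_cons !route_cost_cons /= path_cost_rcons last_rcons; ring.
Qed.

Lemma route_cost_catC s1 s2 :
  route_cost w (s1 ++ s2) = route_cost w (s2 ++ s1).
Proof.
elim: s1 s2 => [|x s1 IHs1] s2; first by rewrite cats0.
by rewrite cat_cons -route_cost_rcons -cats1 -catA IHs1 -catA.
Qed.

(* For [c = [::]] this still holds, as [route_cost w [:: x] = w x x]. *)
Lemma route_cost_insert x z c :
  route_cost w (x :: z :: c) =
  route_cost w (x :: c) + w x z + w z (head x c) - w x (head x c).
Proof. by case: c => [|y c]; rewrite !route_cost_cons /=; ring. Qed.

End RouteCost.

Section SplitRoute.
Variable T : eqType.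

Lemma next_split (a b : seq T) (x : T) :
  uniq (a ++ x :: b) -> next (a ++ x :: b) x = head x (b ++ a).
Proof.
move=> s_uniq; rewrite -(next_rot (size a) s_uniq) rot_size_cat cat_cons.
by rewrite next_nth mem_head /= eqxx; case: (b ++ a).
Qed.

Lemma insert_after_split (a b : seq T) (x z : T) :
  x \notin a -> insert_after (a ++ x :: b) x z = a ++ x :: z :: b.
Proof.
move=> xNa; have idx : index x (a ++ x :: b) = size a.
  by rewrite index_cat (negbTE xNa) /= eqxx addn0.
rewrite /insert_after idx -[a ++ x :: b]cat_rcons.
by rewrite take_size_cat ?drop_size_cat ?size_rcons // cat_rcons.
Qed.

End SplitRoute.

Section Routes.
Variables (T : finType) (V : {set T}).

Lemma route_uniq s : is_route V s -> uniq s.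
Proof. by move=> s_route; rewrite (perm_uniq s_route) enum_uniq. Qed.

Lemma mem_route s : is_route V s -> s =i V.
Proof. by move=> s_route x; rewrite (perm_mem s_route) mem_enum. Qed.

Lemma is_route_catC s1 s2 : is_route V (s1 ++ s2) = is_route V (s2 ++ s1).
Proof. exact: perm_catC. Qed.

Variable Z : T.
Hypothesis ZNV : Z \notin V.

Lemma enum_setU1 : perm_eq (enum (Z |: V)) (Z :: enum V).
Proof.
apply: uniq_perm; rewrite /= ?mem_enum ?ZNV ?enum_uniq // => x.
by rewrite in_cons !mem_enum in_setU1.
Qed.

Lemma is_route_setU1 s1 s2 :
  is_route (Z |: V) (s1 ++ Z :: s2) = is_route V (s1 ++ s2).
Proof.
by rewrite /is_route (permPr enum_setU1) -cat1s perm_catCA perm_cons.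
Qed.

End Routes.

Section Insertion.
Variables (T : finType) (R : realDomainType) (V : {set T}) (Z : T).
Variable w : T -> T -> R.
Hypothesis ZNV : Z \notin V.
Hypothesis wC : forall x y, x != y -> w x y = w y x.

Definition insertion_cost (A B : T) : R := w A Z + w B Z - w A B.

Lemma insertion_costC A B : A != B -> insertion_cost A B = insertion_cost B A.
Proof. by move=> AB; rewrite /insertion_cost [w A Z + _]addrC (wC AB). Qed.

Lemma route_insert_after s X :
  is_route V s -> X \in s ->
  is_route (Z |: V) (insert_after s X Z) /\
  route_cost w (insert_after s X Z) = route_cost w s + insertion_cost X (next s X).
Proof.
move=> s_route Xs; case/splitPr: Xs s_route => a b s_route.
have s_uniq := route_uniq s_route.
have XNa : X \notin a.
  by move: s_uniq; rewrite uniq_catC /= mem_cat negb_or => /andP[/andP[]].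
have ZNs : Z \notin a ++ X :: b by rewrite (mem_route s_route).
have ZY : Z != next (a ++ X :: b) X.
  by apply: contraNneq ZNs => ->; rewrite mem_next mem_cat mem_head orbT.
rewrite insert_after_split // next_split // in ZY *; split.
  by rewrite -cat_rcons (is_route_setU1 ZNV) cat_rcons.
rewrite route_cost_catC [route_cost w (a ++ _)]route_cost_catC !cat_cons.
by rewrite route_cost_insert (wC ZY) /insertion_cost -!addrA.
Qed.

Lemma route_remove_node t :
  (1 < #|V|)%N -> is_route (Z |: V) t ->
  exists s A B, [/\ is_route V s, A \in V, B \in V, A != B &
                    route_cost w t = route_cost w s + insertion_cost A B].
Proof.
move=> V_gt1 t_route; have Zt : Z \in t by rewrite (mem_route t_route) setU11.
case/splitPr: Zt t_route => t1 t2 t_route.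
have s_route : is_route V (t2 ++ t1) by rewrite is_route_catC -(is_route_setU1 ZNV).
have s_size : size (t2 ++ t1) = #|V| by rewrite (perm_size s_route) cardE.
case/lastP E: (t2 ++ t1) s_route s_size => [|[|B u] A] s_route s_size;
  try by rewrite -s_size in V_gt1.
exists (rcons (B :: u) A), A, B; split=> //.
- by rewrite -(mem_route s_route) mem_rcons mem_head.
- by rewrite -(mem_route s_route) rcons_cons mem_head.
- move: (route_uniq s_route); rewrite rcons_cons /= mem_rcons inE.
  by case/andP=> /norP[BA _] _; rewrite eq_sym.
rewrite route_cost_catC cat_cons E -rcons_cons route_cost_rcons.
rewrite route_cost_insert -route_cost_rcons /insertion_cost.
have ZB : Z != B.
  by apply: contraNneq ZNV => ->; rewrite -(mem_route s_route) rcons_cons mem_head.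
by rewrite /= (wC ZB) -!addrA.
Qed.

End Insertion.

Theorem proposition2 (T : finType) (R : realDomainType) (V : {set T}) (Z : T)
    (w : T -> T -> R) (sigma : seq T) (P Q : T) :
  Z \notin V ->
  (forall x y, x != y -> w x y = w y x) ->
  optimal_route w V sigma ->
  P != Q -> neighbours sigma P Q ->
  (forall A B, A \in V -> B \in V -> A != B ->
     ~~ (((A == P) && (B == Q)) || ((A == Q) && (B == P))) ->
     ~ (w A Z + w B Z - w A B <= w P Z + w Q Z - w P Q)) ->
  forall tau,
    (next sigma P = Q /\ tau = insert_after sigma P Z) \/
    (next sigma Q = P /\ tau = insert_after sigma Q Z) ->
    optimal_route w (Z |: V) tau.
Proof.
move=> ZNV wC [sigma_route sigma_opt] PQ /and3P[Psigma Qsigma _] PQ_least tau tau_def.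
have V_gt1 : (1 < #|V|)%N.
  by apply/card_gt1P; exists P, Q; rewrite -!(mem_route sigma_route).
have least_cost A B : A \in V -> B \in V -> A != B ->
    insertion_cost Z w P Q <= insertion_cost Z w A B.
  move=> AV BV AB; case: (boolP (((A == P) && (B == Q)) || ((A == Q) && (B == P)))).
    by case/orP=> /andP[/eqP-> /eqP->]; rewrite // insertion_costC.
  by move=> /(PQ_least _ _ AV BV AB)/negP; rewrite -ltNge; exact: ltW.
have [tau_route tau_cost] : is_route (Z |: V) tau /\
    route_cost w tau = route_cost w sigma + insertion_cost Z w P Q.
  case: tau_def => [[next_P ->] | [next_Q ->]].
    by rewrite -next_P; exact: route_insert_after.
  by rewrite insertion_costC // -next_Q; exact: route_insert_after.
split=> // t /(route_remove_node ZNV wC V_gt1) [s [A [B [s_route AV BV AB ->]]]].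
by rewrite tau_cost; apply: lerD; [exact: sigma_opt | exact: least_cost].
Qed.
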